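(* Let $I$ be a parallel offering instance with $k$ identical positions ($p_{ij}=p_i$, $v_{ij}=v_i$) and $T$ rounds, and let $I'$ be the sequential offering instance with the same candidates, the same $k$, and a budget of $kT$ offers. Then the policy $\mathsf{ALG}_{\mathtt{par}}$ satisfies $R_{\mathsf{ALG}_{\mathtt{par}}}(I)\ge(1-1/e)\,\mathsf{OPT}_{\mathtt{seq}}(I')$.
   Context: Parallel offering: in each of $T$ rounds the firm may send at most one offer per unfilled position, each candidate receives at most one offer overall, candidate $i$ accepts an offer with probability $p_i$ (independently across candidates) and then fills that position, earning $v_i$. Sequential offering: offers are sent one at a time, at most $kT$ offers, each candidate at most one offer, accepting candidates are hired and at most $k$ can be hired; $\mathsf{OPT}_{\mathtt{seq}}(I')$ is the supremum of expected total value over all adaptive sequential policies. $\mathsf{ALG}_{\mathtt{par}}$: solve $\mathrm{LP}_{\mathtt{par}}(I)$ (maximize $\sum_{j,i}v_{ij}p_{ij}y_{ij}$ s.t. $\sum_iy_{ij}\le T$, $\sum_ip_{ij}y_{ij}\le1$ for each $j$, $\sum_jy_{ij}\le1$ for each $i$, $0\le y\le1$), round the optimal $y$ with the Gandhi–Khuller–Parthasarathy–Srinivasan dependent rounding on the candidate–position bipartite graph (outputs $Y\in\{0,1\}^{n\times k}$ with $\mathbb{E}Y_{ij}=y_{ij}$, vertex degrees rounded to floor or ceiling of fractional degrees, and negative correlation of edges at each vertex), put $i$ in list $L_j$ iff $Y_{ij}=1$, and for each position offer the candidates of its list in decreasing order of value, in parallel, until the position is filled. *)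

From HB Require Import structures.
From mathcomp Require Import all_boot all_order all_algebra.
From mathcomp Require Import fingroup perm.
From mathcomp Require Import reals sequences exp.
Set Implicit Arguments. Unset Strict Implicit. Unset Printing Implicit Defensive.
Import Order.TTheory GRing.Theory Num.Theory.
Local Open Scope ring_scope.

Section Offering.
Variables (R : realType) (n k T : nat).
Variables (p v : 'I_n -> R).

(* Acceptance outcomes: omega i = true iff candidate i would accept an offer.
   Independent Bernoulli(p_i) across candidates. *)
Definition outcome := {ffun 'I_n -> bool}.
Definition probw (w : outcome) : R :=
  \prod_(i < n) (if w i then p i else 1 - p i).

Definition history := seq ('I_n * bool).
(* A deterministic adaptive policy: from the history, either offer to a
   candidate or stop. *)
Definition seq_policy := history -> option 'I_n.

Definition hires (h : history) : nat := count snd h.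

(* An offer is admissible if the candidate has not been offered before and
   fewer than k candidates have been hired; an inadmissible choice ends the
   process (equivalent to stopping). *)
Fixpoint seq_run (pol : seq_policy) (w : outcome) (fuel : nat) (h : history)
  : history :=
  match fuel with
  | 0 => h
  | f.+1 =>
    match pol h with
    | Some i =>
        if (i \notin map fst h) && (hires h < k)%N
        then seq_run pol w f (rcons h (i, w i))
        else h
    | None => h
    end
  end.

Definition hist_value (h : history) : R :=
  \sum_(x <- h | x.2) v x.1.

Definition seq_value (pol : seq_policy) : R :=
  \sum_(w : outcome) probw w * hist_value (seq_run pol w (k * T) [::]).

Definition lp_feasible (y : 'I_n -> 'I_k -> R) : Prop :=
  [/\ (forall i j, 0 <= y i j <= 1),
      (forall j, \sum_(i < n) y i j <= T%:R),
      (forall j, \sum_(i < n) p i * y i j <= 1)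
    & (forall i, \sum_(j < k) y i j <= 1)].

Definition lp_obj (y : 'I_n -> 'I_k -> R) : R :=
  \sum_(j < k) \sum_(i < n) v i * p i * y i j.

Definition lp_optimal (y : 'I_n -> 'I_k -> R) : Prop :=
  lp_feasible y /\ (forall y', lp_feasible y' -> lp_obj y' <= lp_obj y).

(* ---------- GKPS dependent rounding (by its guaranteed properties) ---------- *)
Definition rounding := {ffun 'I_n * 'I_k -> bool}.

Definition degC (Y : rounding) (i : 'I_n) : nat := \sum_(j < k) Y (i, j).
Definition degP (Y : rounding) (j : 'I_k) : nat := \sum_(i < n) Y (i, j).

Definition is_GKPS_rounding (y : 'I_n -> 'I_k -> R) (mu : rounding -> R)
  : Prop :=
  [/\ (forall Y, 0 <= mu Y),
      \sum_(Y : rounding) mu Y = 1,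
      (forall i j, \sum_(Y : rounding) mu Y * (Y (i, j))%:R = y i j),
      (forall Y, 0 < mu Y ->
         (forall i, let d := \sum_(j < k) y i j in
            ((degC Y i)%:Z == Num.floor d) || ((degC Y i)%:Z == Num.ceil d)) /\
         (forall j, let d := \sum_(i < n) y i j in
            ((degP Y j)%:Z == Num.floor d) || ((degP Y j)%:Z == Num.ceil d)))
    &
      (forall (i : 'I_n) (S : {set 'I_k}) (b : bool),
         \sum_(Y : rounding | [forall j in S, Y (i, j) == b]) mu Y
           <= \prod_(j in S) (if b then y i j else 1 - y i j)) /\
      (forall (j : 'I_k) (S : {set 'I_n}) (b : bool),
         \sum_(Y : rounding | [forall i in S, Y (i, j) == b]) mu Y
           <= \prod_(i in S) (if b then y i j else 1 - y i j))].

(* ord : a priority order on candidates (rank pi i; smaller = earlier),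
   used to list L_j in decreasing order of value (ties broken by pi). *)
Definition list_of (pi : {perm 'I_n}) (Y : rounding) (j : 'I_k) : seq 'I_n :=
  [seq i <- sort (fun a b => (pi a <= pi b)%N) (enum 'I_n) | Y (i, j)].

(* Position j offers to L_j[0], L_j[1], ... in rounds 0,1,...,T-1 until
   someone accepts; it earns the value of the first acceptor (if any). *)
Definition position_value (pi : {perm 'I_n}) (Y : rounding) (w : outcome)
  (j : 'I_k) : R :=
  match [seq i <- take T (list_of pi Y j) | w i] with
  | i :: _ => v i
  | [::] => 0
  end.

Definition par_reward (pi : {perm 'I_n}) (Y : rounding) (w : outcome) : R :=
  \sum_(j < k) position_value pi Y w j.

Definition ALG_par_value (mu : rounding -> R) (tb : rounding -> {perm 'I_n})
  : R :=
  \sum_(Y : rounding) mu Y * \sum_(w : outcome) probw w * par_reward (tb Y) Y w.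

Definition decreasing_value_order (pi : {perm 'I_n}) : Prop :=
  forall a b : 'I_n, v b < v a -> (pi a < pi b)%N.

End Offering.

From mathcomp Require Import all_boot all_order all_algebra perm.
From mathcomp Require Import reals sequences exp convex interval_inference.
From mathcomp Require Import lra ring.
Import Order.TTheory GRing.Theory Num.Theory.
Set Implicit Arguments. Unset Strict Implicit. Unset Printing Implicit Defensive.
Local Open Scope ring_scope.

(* Both policies are compared with the optimum of LP_par.  For a sequential
   policy let x_i be the probability that candidate i receives an offer;
   whether i is offered does not depend on i's own answer, so i is hired with
   probability p_i x_i, and y_ij = x_i / k is LP-feasible with objective the
   value of the policy.  For ALG_par fix a position j: its rounded list has at
   most T members, so j earns at least the largest value among its listed
   accepting candidates.  By negative correlation of the rounding, no candidate
   of a set U is listed and accepts with probability at most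
   prod_(i in U) (1 - p_i y_ij) <= exp (- sum_(i in U) p_i y_ij); as that sum is
   at most 1, convexity of exp gives probability at least
   (1 - 1/e) sum_(i in U) p_i y_ij that some candidate of U is.  Summing these
   bounds over the upper level sets of v bounds the expected earnings of j by
   (1 - 1/e) sum_i v_i p_i y_ij. *)

Lemma expRN_le_secant (R : realType) (s : R) : 0 <= s <= 1 ->
  expR (- s) <= 1 - (1 - expR (-1)) * s.
Proof.
case/andP=> s0 s1; have := convex_expR (Itv01 s0 s1) (-1) 0.
rewrite !convRE /= expR0 !mulr0 !addr0 mulr1 mulrN1.
have -> : unstable.onem s = 1 - s by [].
lra.
Qed.

Lemma sum_seq_indicator (R : pzSemiRingType) (I : finType) (s : seq I) (P : pred I)
    (F : I -> R) : uniq s ->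
  \sum_(i <- s | P i) F i = \sum_i F i * ((i \in s) && P i)%:R.
Proof.
move=> s_uniq; rewrite big_mkcond big_uniq //= big_mkcond /=.
by apply: eq_bigr => i _; case: (i \in s); case: (P i); rewrite ?mulr1 ?mulr0.
Qed.

Lemma count_seq_indicator (R : pzSemiRingType) (I : finType) (s : seq I)
    (P : pred I) : uniq s -> (count P s)%:R = \sum_i ((i \in s) && P i)%:R :> R.
Proof.
move=> s_uniq; rewrite -sum1_count natr_sum sum_seq_indicator //.
by apply: eq_bigr => i _; rewrite mul1r.
Qed.

Section WeightedSum.
Variables (R : realDomainType) (Omega : finType) (P : Omega -> R).
Hypothesis P_ge0 : forall o, 0 <= P o.

Definition expect (f : Omega -> R) : R := \sum_o P o * f o.

Lemma ler_expect (f g : Omega -> R) :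
  (forall o, 0 < P o -> f o <= g o) -> expect f <= expect g.
Proof.
move=> fg; apply: ler_sum => o _.
have [P0|P_neq0] := eqVneq (P o) 0; first by rewrite P0 !mul0r.
by rewrite ler_wpM2l // fg // lt_def P_neq0 P_ge0.
Qed.

Lemma expect0 : expect (fun=> 0) = 0.
Proof. by apply: big1 => o _; rewrite mulr0. Qed.

Lemma expectBZ (f g : Omega -> R) (c : R) :
  expect (fun o => f o - c * g o) = expect f - c * expect g.
Proof. by rewrite /expect mulr_sumr -sumrB; apply: eq_bigr => o _; ring. Qed.

Lemma expect_sum (J : Type) (r : seq J) (f : J -> Omega -> R) :
  expect (fun o => \sum_(j <- r) f j o) = \sum_(j <- r) expect (f j).
Proof.
by rewrite /expect exchange_big /=; apply: eq_bigr => o _; rewrite mulr_sumr.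
Qed.

Variables (I : finType) (c : R) (a : I -> R) (hit : I -> Omega -> bool).
Hypothesis expect_hit_ge : forall U : {set I},
  c * \sum_(i in U) a i <= expect (fun o => ([exists i in U, hit i o] : bool)%:R).

(* Peel off an index [i] of least value: [F] pays at least [x i] whenever some
   index of [V] is hit, and the excess over [x i] is covered by induction on
   [V :\ i] with all values shifted down by [x i]. *)
Lemma layer_cake_expect_ge (V : {set I}) (x : I -> R) (F : Omega -> R) :
  {in V, forall i, 0 <= x i} ->
  (forall o, 0 < P o -> 0 <= F o) ->
  (forall o i, 0 < P o -> i \in V -> hit i o -> x i <= F o) ->
  c * \sum_(i in V) a i * x i <= expect F.
Proof.
move Em : #|V| => m; elim: m V Em x F => [|m IH] V cardV x F x_ge0 F_ge0 F_ge.
  rewrite (cards0_eq cardV) big_set0 mulr0 -expect0; exact: ler_expect.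
have [i0 i0V] : exists i, i \in V by apply/card_gt0P; rewrite cardV.
case: (@arg_minP _ _ _ i0 (mem V) x i0V) => i iV' i_min.
have iV : i \in V := iV'.
pose hitV o : R := ([exists l in V, hit l o] : bool)%:R.
have xi_ge0 : 0 <= x i by exact: x_ge0.
have cardVi : #|V :\ i| = m.
  by move: cardV; rewrite (cardsD1 i) iV add1n => -[].
have IHi : c * \sum_(l in V :\ i) a l * (x l - x i) <= expect F - x i * expect hitV.
  rewrite -expectBZ; apply: (IH _ cardVi).
  - move=> l; rewrite inE => /andP[_ lV]; rewrite subr_ge0; exact: i_min.
  - move=> o Po; rewrite /hitV; case: existsP => [[l /andP[lV hl]]|_].
      by rewrite mulr1 subr_ge0 (le_trans (i_min l lV)) // F_ge.
    by rewrite mulr0 subr0 F_ge0.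
  - move=> o l Po; rewrite inE => /andP[_ lV] hl.
    have -> : hitV o = 1.
      by rewrite /hitV; case: existsP => // -[]; exists l; rewrite lV.
    by rewrite mulr1 lerB // F_ge.
have split_V (f : I -> R) : \sum_(l in V) f l = f i + \sum_(l in V :\ i) f l.
  by rewrite (bigD1 i) //=; congr (_ + _); apply: eq_bigl => l; rewrite !inE andbC.
have -> : c * \sum_(l in V) a l * x l =
    c * \sum_(l in V :\ i) a l * (x l - x i) + x i * (c * \sum_(l in V) a l).
  rewrite !split_V.
  have -> : \sum_(l in V :\ i) a l * (x l - x i) =
      \sum_(l in V :\ i) a l * x l - (\sum_(l in V :\ i) a l) * x i.
    by rewrite mulr_suml -sumrB; apply: eq_bigr => l _; rewrite mulrBr.
  ring.
rewrite -[expect F](subrK (x i * expect hitV)).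
by apply: lerD => //; apply: ler_wpM2l => //; apply: expect_hit_ge.
Qed.

End WeightedSum.

Lemma sum_outcome_prod (R : pzSemiRingType) (n : nat) (F : 'I_n -> bool -> R) :
  \sum_(w : outcome n) \prod_i F i (w i) = \prod_i (F i true + F i false).
Proof. by rewrite -bigA_distr_bigA; apply: eq_bigr => i _; rewrite big_bool. Qed.

Section IndependentAnswers.
Variables (R : realType) (n : nat) (p : 'I_n -> R).
Hypothesis hp : forall i, 0 <= p i <= 1.

Lemma probw_ge0 (w : outcome n) : 0 <= probw p w.
Proof. by apply: prodr_ge0 => i _; case: (w i); have /andP[] := hp i; lra. Qed.

Lemma sum_probw : \sum_(w : outcome n) probw p w = 1.
Proof.
rewrite (sum_outcome_prod (fun i b => if b then p i else 1 - p i)).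
by apply: big1 => i _; rewrite addrC subrK.
Qed.

Lemma sum_probw_le (f : outcome n -> R) (c : R) :
  (forall w, f w <= c) -> \sum_(w : outcome n) probw p w * f w <= c.
Proof.
move=> f_le; rewrite -[leRHS]mul1r -sum_probw mulr_suml.
by apply: ler_sum => w _; rewrite ler_wpM2l ?probw_ge0.
Qed.

End IndependentAnswers.

Section SequentialOffering.
Variables (R : realType) (n k T : nat) (p v : 'I_n -> R).
Hypothesis hp : forall i, 0 <= p i <= 1.
Variable pol : seq_policy n.

Definition valid_history (w : outcome n) (h : history n) : bool :=
  [&& h == [seq (i, w i) | i <- unzip1 h], uniq (unzip1 h) & (hires h <= k)%N].

Lemma valid_seq_run (w : outcome n) f (h : history n) :
  valid_history w h -> valid_history w (seq_run k pol w f h).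
Proof.
elim: f h => [|f IH] h h_valid //=.
case: (pol h) => [i|] //; case: ifP => // /andP[i_new h_lt]; apply: IH.
case/and3P: h_valid => /eqP h_ans h_uniq _.
rewrite /valid_history /unzip1 !map_rcons -/(unzip1 h) -h_ans eqxx.
rewrite rcons_uniq i_new h_uniq /hires -cats1 count_cat /= addn0.
by case: (w i); rewrite ?addn1 ?addn0 // ltnW.
Qed.

Lemma size_seq_run (w : outcome n) f (h : history n) :
  (size (seq_run k pol w f h) <= size h + f)%N.
Proof.
elim: f h => [|f IH] h /=; first by rewrite addn0.
case: (pol h) => [i|]; last exact: leq_addr.
case: ifP => _; last exact: leq_addr.
by rewrite (leq_trans (IH _)) // size_rcons addSnnS.
Qed.

Lemma mem_seq_run (w : outcome n) f (h : history n) i :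
  i \in unzip1 h -> i \in unzip1 (seq_run k pol w f h).
Proof.
elim: f h => [|f IH] h ih //=.
case: (pol h) => [j|] //; case: ifP => // _; apply: IH.
by rewrite /unzip1 map_rcons mem_rcons in_cons ih orbT.
Qed.

Definition toggle (i : 'I_n) (w : outcome n) : outcome n :=
  [ffun l => if l == i then ~~ w l else w l].

Lemma toggleK i : involutive (toggle i).
Proof.
by move=> w; apply/ffunP => l; rewrite !ffunE; case: (l == i); rewrite ?negbK.
Qed.

(* The answer of [i] is only read once [i] has been offered. *)
Lemma seq_run_toggle (w : outcome n) i f (h : history n) :
  (i \in unzip1 (seq_run k pol (toggle i w) f h)) =
  (i \in unzip1 (seq_run k pol w f h)).
Proof.
elim: f h => [|f IH] h //=.
case: (pol h) => [j|] //; case: ifP => // _.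
have [->|ne] := eqVneq j i.
  by rewrite !mem_seq_run // /unzip1 map_rcons mem_rcons in_cons eqxx.
by rewrite /toggle ffunE (negbTE ne) IH.
Qed.

Definition full_run (w : outcome n) : history n := seq_run k pol w (k * T) [::].

Definition offered (w : outcome n) (i : 'I_n) : bool := i \in unzip1 (full_run w).

Definition offer_prob (i : 'I_n) : R :=
  \sum_(w : outcome n) probw p w * (offered w i)%:R.

(* [toggle i] exchanges the outcomes where [i] accepts with those where it
   declines, keeping [offered _ i] and the weights of all other answers. *)
Lemma hire_prob i :
  \sum_(w : outcome n) probw p w * (offered w i && w i)%:R = p i * offer_prob i.
Proof.
pose rest (w : outcome n) := \prod_(l < n | l != i) (if w l then p l else 1 - p l).
pose g w := rest w * (offered w i)%:R.
have probwE w : probw p w = (if w i then p i else 1 - p i) * rest w.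
  by rewrite /probw (bigD1 i).
have g_toggle : \sum_(w : outcome n | ~~ w i) g w = \sum_(w : outcome n | w i) g w.
  rewrite (reindex_inj (can_inj (toggleK i))) /=; apply: eq_big => w.
    by rewrite ffunE eqxx negbK.
  move=> _; rewrite /g /offered /full_run seq_run_toggle; congr (_ * _).
  by apply: eq_bigr => l ne; rewrite ffunE (negbTE ne).
rewrite /offer_prob (bigID (fun w : outcome n => w i)).
rewrite [in RHS](bigID (fun w : outcome n => w i)) /=.
have -> : \sum_(w : outcome n | ~~ w i) probw p w * (offered w i && w i)%:R = 0.
  by apply: big1 => w /negbTE ->; rewrite andbF mulr0.
have -> : \sum_(w : outcome n | w i) probw p w * (offered w i && w i)%:R =
          p i * \sum_(w : outcome n | w i) g w.
  by rewrite mulr_sumr; apply: eq_bigr => w wi; rewrite probwE wi andbT mulrA.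
have -> : \sum_(w : outcome n | w i) probw p w * (offered w i)%:R =
          p i * \sum_(w : outcome n | w i) g w.
  by rewrite mulr_sumr; apply: eq_bigr => w wi; rewrite probwE wi mulrA.
have -> : \sum_(w : outcome n | ~~ w i) probw p w * (offered w i)%:R =
          (1 - p i) * \sum_(w : outcome n | ~~ w i) g w.
  by rewrite mulr_sumr; apply: eq_bigr => w /negbTE wi; rewrite probwE wi mulrA.
rewrite g_toggle; ring.
Qed.

Lemma valid_full_run (w : outcome n) : valid_history w (full_run w).
Proof. exact: valid_seq_run. Qed.

Lemma seq_value_offer_prob :
  seq_value k T p v pol = \sum_i v i * p i * offer_prob i.
Proof.
have hist_valueE w : hist_value v (full_run w) =
    \sum_i v i * (offered w i && w i)%:R.
  case/and3P: (valid_full_run w) => /eqP h_ans h_uniq _.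
  by rewrite /hist_value h_ans big_map /= sum_seq_indicator.
rewrite /seq_value (eq_bigr _ (fun w _ => congr1 _ (hist_valueE w))).
under eq_bigr do rewrite mulr_sumr.
rewrite exchange_big /=; apply: eq_bigr => i _.
by rewrite -mulrA -hire_prob mulr_sumr; apply: eq_bigr => w _; ring.
Qed.

Lemma sum_hire_prob_le : \sum_i p i * offer_prob i <= k%:R.
Proof.
under eq_bigr do rewrite -hire_prob.
rewrite exchange_big /=; under eq_bigr do rewrite -mulr_sumr.
apply: sum_probw_le => // w.
case/and3P: (valid_full_run w) => /eqP h_ans h_uniq hires_le.
by move: hires_le; rewrite -count_seq_indicator // ler_nat /hires {1}h_ans count_map.
Qed.

Lemma sum_offer_prob_le : \sum_i offer_prob i <= (k * T)%:R.
Proof.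
rewrite exchange_big /=; under eq_bigr do rewrite -mulr_sumr.
apply: sum_probw_le => // w; case/and3P: (valid_full_run w) => _ h_uniq _.
rewrite (eq_bigr (fun i => ((i \in unzip1 (full_run w)) && predT i)%:R)).
  by rewrite -count_seq_indicator // count_predT size_map ler_nat size_seq_run.
by move=> i _; rewrite andbT.
Qed.

Lemma offer_prob_ge0 i : 0 <= offer_prob i.
Proof. by apply: sumr_ge0 => w _; rewrite mulr_ge0 ?probw_ge0. Qed.

Lemma offer_prob_le1 i : offer_prob i <= 1.
Proof. by apply: sum_probw_le => // w; rewrite lern1 leq_b1. Qed.

Section SpreadOverPositions.
Hypothesis k_gt0 : (0 < k)%N.

Definition spread_offer_prob (i : 'I_n) (j : 'I_k) : R := offer_prob i / k%:R.

Lemma lp_feasible_spread : lp_feasible T p spread_offer_prob.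
Proof.
have kR : 0 < k%:R :> R by rewrite ltr0n.
rewrite /spread_offer_prob; split.
- move=> i j; rewrite divr_ge0 ?offer_prob_ge0 ?ler0n //=.
  by rewrite ler_pdivrMr // mul1r (le_trans (offer_prob_le1 i)) // ler1n.
- by move=> j; rewrite -mulr_suml ler_pdivrMr // -natrM mulnC sum_offer_prob_le.
- move=> j; under eq_bigr do rewrite mulrA.
  by rewrite -mulr_suml ler_pdivrMr // mul1r sum_hire_prob_le.
- move=> i; rewrite sumr_const card_ord -[_ *+ k]mulr_natr divfK ?offer_prob_le1 //.
  by rewrite gt_eqF.
Qed.

Lemma lp_obj_spread : lp_obj p v spread_offer_prob = seq_value k T p v pol.
Proof.
rewrite seq_value_offer_prob /lp_obj exchange_big /=; apply: eq_bigr => i _.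
rewrite /spread_offer_prob sumr_const card_ord -[_ *+ k]mulr_natr -!mulrA.
rewrite mulVf ?mulr1 //.
by rewrite pnatr_eq0 -lt0n.
Qed.

End SpreadOverPositions.
End SequentialOffering.

Lemma seq_value_le_lp_opt (R : realType) (n k T : nat) (p v : 'I_n -> R)
    (hp : forall i, 0 <= p i <= 1) (y : 'I_n -> 'I_k -> R)
    (hy : lp_optimal T p v y) (pol : seq_policy n) :
  seq_value k T p v pol <= lp_obj p v y.
Proof.
case: hy => _ y_opt; have [k0|k_gt0] := posnP k.
  move: y y_opt; rewrite k0 => y _.
  rewrite /lp_obj big_ord0 /seq_value mul0n big1 // => w _.
  by rewrite /hist_value big_nil mulr0.
rewrite -(@lp_obj_spread R n k T p v pol k_gt0) y_opt //.
exact: lp_feasible_spread.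
Qed.

Lemma size_list_of (n k : nat) (pi : {perm 'I_n}) (Y : rounding n k) (j : 'I_k) :
  size (list_of pi Y j) = degP Y j.
Proof.
rewrite /list_of size_filter count_sort /degP -sumn_count sumnE big_map.
by rewrite big_enum.
Qed.

Lemma floor_or_ceil_le_nat (R : archiRealDomainType) (d : R) (m T : nat) :
  d <= T%:R -> (m%:Z == Num.floor d) || (m%:Z == Num.ceil d) -> (m <= T)%N.
Proof.
move=> d_le /orP m_round; rewrite -lez_nat (@le_trans _ _ (Num.ceil d)) //.
  by case: m_round => /eqP ->; rewrite ?ceil_floor ?lerDl.
by rewrite ceil_le_int.
Qed.

Section PositionValue.
Variables (R : realType) (n k T : nat) (v : 'I_n -> R).
Variables (pi : {perm 'I_n}) (Y : rounding n k) (w : outcome n) (j : 'I_k).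

Lemma position_value_ge0 : (forall i, 0 <= v i) -> 0 <= position_value T v pi Y w j.
Proof. by rewrite /position_value; case: [seq _ <- _ | _] => [|i _] //; apply. Qed.

Lemma position_value_ge i : decreasing_value_order v pi -> (degP Y j <= T)%N ->
  Y (i, j) -> w i -> v i <= position_value T v pi Y w j.
Proof.
move=> pi_dec deg_le Yij wi.
rewrite /position_value take_oversize ?size_list_of // /list_of -filter_predI.
set le_pi := fun a b : 'I_n => (pi a <= pi b)%N.
have le_pi_trans : transitive le_pi by move=> a b c; apply: leq_trans.
have := sorted_filter le_pi_trans (predI w (fun l => Y (l, j)))
  (sort_sorted (fun a b => leq_total (pi a) (pi b)) (enum 'I_n)).
have : i \in [seq l <- sort le_pi (enum 'I_n) | predI w (fun l => Y (l, j)) l].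
  by rewrite mem_filter mem_sort mem_enum /= wi Yij.
case: [seq l <- _ | _] => [|h t] //; rewrite in_cons => /orP[/eqP -> //|i_t].
move=> /(order_path_min le_pi_trans)/allP/(_ i i_t); rewrite /le_pi => le_hi.
by rewrite leNgt; apply/negP => /pi_dec; rewrite ltnNge le_hi.
Qed.

End PositionValue.

Section ParallelOffering.
Variables (R : realType) (n k T : nat) (p v : 'I_n -> R).
Hypothesis hp : forall i, 0 <= p i <= 1.
Variables (y : 'I_n -> 'I_k -> R) (mu : rounding n k -> R).
Hypothesis hy : lp_feasible T p y.
Hypothesis hmu : is_GKPS_rounding y mu.

Definition joint (o : rounding n k * outcome n) : R := mu o.1 * probw p o.2.

Lemma mu_ge0 Y : 0 <= mu Y.
Proof. by case: hmu. Qed.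

Lemma joint_ge0 o : 0 <= joint o.
Proof. by rewrite mulr_ge0 ?mu_ge0 ?probw_ge0. Qed.

Lemma joint_gt0 o : 0 < joint o -> 0 < mu o.1.
Proof.
move=> joint_pos; rewrite lt_def mu_ge0 andbT.
by apply: contraTneq joint_pos => mu0; rewrite /joint mu0 mul0r ltxx.
Qed.

Lemma expect_jointE (f : rounding n k * outcome n -> R) : expect joint f =
  \sum_(w : outcome n) probw p w * \sum_(Y : rounding n k) mu Y * f (Y, w).
Proof.
have -> : expect joint f =
    \sum_(Y : rounding n k) \sum_(w : outcome n) joint (Y, w) * f (Y, w).
  by rewrite pair_bigA; apply: eq_bigr => -[].
rewrite exchange_big /=; apply: eq_bigr => w _; rewrite mulr_sumr.
by apply: eq_bigr => Y _; rewrite /joint /=; ring.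
Qed.

Lemma expect_joint1 : expect joint (fun=> 1) = 1.
Proof.
rewrite expect_jointE -[RHS](sum_probw p); apply: eq_bigr => w _.
under eq_bigr do rewrite mulr1.
by case: hmu => _ -> _ _ _; rewrite mulr1.
Qed.

Section Position.
Variable j : 'I_k.

Lemma miss_prob_le (U : {set 'I_n}) :
  expect joint (fun o => ([forall i in U, ~~ (o.1 (i, j) && o.2 i)] : bool)%:R)
  <= \prod_(i in U) (1 - p i * y i j).
Proof.
have neg_corr (w : outcome n) : \sum_(Y : rounding n k) mu Y *
      ([forall i in U, ~~ (Y (i, j) && w i)] : bool)%:R
    <= \prod_(i in U :&: [set i | w i]) (1 - y i j).
  case: hmu => _ _ _ _ [_ /(_ j (U :&: [set i | w i]) false)]; apply: le_trans.
  rewrite [leRHS]big_mkcond /= le_eqVlt; apply/orP; left; apply/eqP.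
  apply: eq_bigr => Y _.
  have -> : [forall i in U, ~~ (Y (i, j) && w i)] =
            [forall i in U :&: [set i | w i], Y (i, j) == false].
    by apply/forallP/forallP => H i; have := H i; rewrite !inE;
      case: (i \in U); case: (w i); case: (Y (i, j)).
  by case: ifP => _; rewrite ?mulr1 ?mulr0.
rewrite expect_jointE /=.
apply: (@le_trans _ _ (\sum_(w : outcome n) probw p w *
    \prod_(i in U :&: [set i | w i]) (1 - y i j))).
  by apply: ler_sum => w _; rewrite ler_wpM2l ?probw_ge0.
pose G i (b : bool) := (if b then p i else 1 - p i) *
   (if b && (i \in U) then 1 - y i j else 1).
have -> : \sum_(w : outcome n) probw p w *
    \prod_(i in U :&: [set i | w i]) (1 - y i j) =
  \sum_(w : outcome n) \prod_i G i (w i).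
  apply: eq_bigr => w _; rewrite /probw /G big_split /=; congr (_ * _).
  rewrite big_mkcond /=; apply: eq_bigr => i _.
  by rewrite !inE; case: (i \in U); case: (w i).
rewrite sum_outcome_prod [leRHS]big_mkcond /= le_eqVlt; apply/orP; left.
apply/eqP; apply: eq_bigr => i _.
by rewrite /G; case: (i \in U) => /=; ring.
Qed.

Lemma hit_prob_ge (U : {set 'I_n}) :
  (1 - expR (-1)) * \sum_(i in U) p i * y i j
  <= expect joint (fun o => ([exists i in U, o.1 (i, j) && o.2 i] : bool)%:R).
Proof.
case: hy => y01 _ load_le1 _.
have a01 i : 0 <= p i * y i j <= 1.
  have /andP[p0 p1] := hp i; have /andP[y0 y1] := y01 i j.
  by rewrite mulr_ge0 //= -[1]mulr1 ler_pM.
set s := \sum_(i in U) p i * y i j.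
have s01 : 0 <= s <= 1.
  rewrite sumr_ge0 => [|i _]; last by case/andP: (a01 i).
  apply: le_trans (load_le1 j); rewrite [leRHS](bigID (mem U)) /= lerDl.
  by apply: sumr_ge0 => i _; case/andP: (a01 i).
have miss_le_exp : \prod_(i in U) (1 - p i * y i j) <= expR (- s).
  rewrite /s -sumrN expR_sum; apply: ler_prod => i _.
  case/andP: (a01 i) => a0 a1; rewrite subr_ge0 a1 /=.
  exact: expR_ge1Dx.
have -> : expect joint (fun o => ([exists i in U, o.1 (i, j) && o.2 i] : bool)%:R) =
  expect joint (fun o =>
    1 - 1 * ([forall i in U, ~~ (o.1 (i, j) && o.2 i)] : bool)%:R).
  apply: eq_bigr => o _; congr (_ * _).
  have -> : [exists i in U, o.1 (i, j) && o.2 i] =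
      ~~ [forall i in U, ~~ (o.1 (i, j) && o.2 i)].
    by rewrite negb_forall; apply: eq_existsb => i; rewrite negb_imply negbK.
  by case: [forall i in U, _]; rewrite mul1r ?subrr ?subr0.
rewrite expectBZ expect_joint1 mul1r.
have := miss_prob_le U; have := expRN_le_secant s01; lra.
Qed.

End Position.

Lemma lp_obj_le_ALG_par (tb : rounding n k -> {perm 'I_n}) :
  (forall i, 0 <= v i) -> (forall Y, decreasing_value_order v (tb Y)) ->
  (1 - expR (-1)) * lp_obj p v y <= ALG_par_value T p v mu tb.
Proof.
move=> hv tb_dec.
have ALG_parE : ALG_par_value T p v mu tb =
    expect joint (fun o => par_reward T v (tb o.1) o.1 o.2).
  rewrite expect_jointE /ALG_par_value; under eq_bigr do rewrite mulr_sumr.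
  under [RHS]eq_bigr do rewrite mulr_sumr.
  by rewrite exchange_big; apply: eq_bigr => w _; apply: eq_bigr => Y _ /=; ring.
rewrite ALG_parE /par_reward expect_sum /lp_obj mulr_sumr; apply: ler_sum => j _.
have -> : \sum_(i < n) v i * p i * y i j = \sum_(i in [set: 'I_n]) p i * y i j * v i.
  by apply: eq_big => [i|i _]; rewrite ?inE //; ring.
apply: (layer_cake_expect_ge joint_ge0 (hit_prob_ge j)) => [i _ //|o _|].
  exact: position_value_ge0.
move=> [Y w] i /joint_gt0 /= Y_supp _ /andP[Yij wi].
apply: position_value_ge => //.
case: hmu => _ _ _ /(_ Y Y_supp) [_ /(_ j) deg_round] _.
by case: hy => _ load_le _ _; exact: floor_or_ceil_le_nat (load_le j) deg_round.
Qed.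

End ParallelOffering.

Theorem corollary5p1 (R : realType) (n k T : nat) (p v : 'I_n -> R)
  (hp : forall i, 0 <= p i <= 1) (hv : forall i, 0 <= v i)
  (y : 'I_n -> 'I_k -> R) (hy : lp_optimal T p v y)
  (mu : rounding n k -> R) (hmu : is_GKPS_rounding y mu)
  (tb : rounding n k -> {perm 'I_n})
  (htb : forall Y, decreasing_value_order v (tb Y)) :
  forall pol : seq_policy n,
    (1 - expR (-1)) * seq_value k T p v pol <= ALG_par_value T p v mu tb.
Proof.
move=> pol; have e_ge0 : 0 <= 1 - expR (-1) :> R.
  by rewrite subr_ge0 expR_le1 lerN10.
apply: le_trans (lp_obj_le_ALG_par hp _ hmu hv htb); last by case: hy.
by rewrite ler_wpM2l // (seq_value_le_lp_opt hp hy).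
Qed.
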